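(* Let $m\ge2$, $k\ge1$ be integers, $\alpha\in(1,m^{1/k})$, $\tau>0$, and $\Theta\sim U[0,1]$. Then: (1) $\mathbb{E}_\Theta[\mathcal{R}^\alpha_{m,k,\Theta}(t)]=\frac{k}{\ln m}\left(\alpha+\frac{m^{1/k}}{\alpha}-2\right)t$ for every $t>0$; (2) $\mathbb{E}_\Theta\!\left[\frac{1}{\mathcal{R}^\alpha_{m,k,\Theta}(t)}\right]=\frac{k}{\ln m}\left(2-\frac1\alpha-\frac{\alpha}{m^{1/k}}\right)\frac1t$ for every $t>0$; (3) $\mathbb{E}_\Theta[\mathcal{D}^\alpha_{m,k,\Theta}]=\frac{k}{\ln m}\left(\left(1-\frac{\alpha}{m^{1/k}}\right)\Sigma^{\alpha,\mathrm{prim}}_{m,k}+\left(1-\frac1\alpha\right)\Sigma^{\alpha,\mathrm{sec}}_{m,k}\right)\frac1\tau$.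
   Context: Primary grid $\mathcal{G}_{m,k}=\{m^{p/k}\tau:p\in\mathbb{Z}\}$, secondary grid $\mathcal{G}^\alpha_{m,k}=\{\alpha m^{p/k}\tau:p\in\mathbb{Z}\}$; for $\theta\in[0,1]$ the shifted interleaved grid is $\mathcal{H}^\alpha_{m,k,\theta}=\{m^{\theta/k}g:g\in\mathcal{G}_{m,k}\cup\mathcal{G}^\alpha_{m,k}\}$, and $\mathcal{R}^\alpha_{m,k,\theta}(t)=\min\{g\in\mathcal{H}^\alpha_{m,k,\theta}:g>t\}$ for $t>0$. For $g>0$, $\Delta\ge0$, $\mathcal{M}_{g,\Delta}=\{0,g,\dots,\lfloor\Delta/g\rfloor g\}$. Density coefficient: $\mathcal{D}^\alpha_{m,k,\theta}=\lim_{\Delta\to\infty}\frac1\Delta\big|\bigcup_{g\in\mathcal{H}^\alpha_{m,k,\theta}\cap[\mathcal{R}^\alpha_{m,k,\theta}(\tau),\infty)}\mathcal{M}_{g,\Delta}\big|$. For a finite $\mathcal{N}\subseteq\mathbb{R}_{>0}$, $\mathrm{LCM}(\mathcal{N})$ is the smallest positive real that is an integer multiple of every element of $\mathcal{N}$, or $\infty$ if none exists; $1/\infty=0$. Let $\mathcal{S}^{\alpha,\mathrm{prim}}_{m,k}=\{m^{(\kappa-1)/k}\}_{\kappa\in[k]}\cup\{\alpha m^{(\kappa-1)/k}\}_{\kappa\in[k]}$, $\mathcal{S}^{\alpha,\mathrm{sec}}_{m,k}=\{m^{(\kappa-1)/k}\}_{\kappa\in[k]}\cup\{\frac1\alpha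 m^{\kappa/k}\}_{\kappa\in[k]}$, and $\Sigma^{\alpha,\mathrm{prim}}_{m,k}=\sum_{\emptyset\ne\mathcal{N}\subseteq\mathcal{S}^{\alpha,\mathrm{prim}}_{m,k}}\frac{(-1)^{|\mathcal{N}|+1}}{\mathrm{LCM}(\mathcal{N})}$, $\Sigma^{\alpha,\mathrm{sec}}_{m,k}=\sum_{\emptyset\ne\mathcal{N}\subseteq\mathcal{S}^{\alpha,\mathrm{sec}}_{m,k}}\frac{(-1)^{|\mathcal{N}|+1}}{\mathrm{LCM}(\mathcal{N})}$. *)

From HB Require Import structures.
From mathcomp Require Import all_boot all_order all_algebra.
From mathcomp Require Import finmap.
From mathcomp Require Import all_classical all_reals all_analysis.
Set Implicit Arguments. Unset Strict Implicit. Unset Printing Implicit Defensive.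
Import Order.TTheory GRing.Theory Num.Theory.
Import numFieldNormedType.Exports.
Local Open Scope classical_set_scope.
Local Open Scope ring_scope.

Section Defs.
Variable R : realType.

Definition Hgrid (m k : nat) (alpha tau theta : R) : set R :=
  [set g | exists p : int,
     g = (m%:R `^ (theta / k%:R)) * ((m%:R `^ (p%:~R / k%:R)) * tau) \/
     g = (m%:R `^ (theta / k%:R)) * (alpha * (m%:R `^ (p%:~R / k%:R)) * tau)].

(* R^alpha_{m,k,theta}(t) = min { g in H : g > t } (the minimum exists since
   the grid is a discrete geometric-type set; we take the infimum). *)
Definition Rnext (m k : nat) (alpha tau theta t : R) : R :=
  inf [set g | Hgrid m k alpha tau theta g /\ t < g].

Definition Mset (g Delta : R) : set R :=
  [set x | exists n : nat, x = n%:R * g /\ (n%:R <= Delta / g)].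

Definition Dunion (m k : nat) (alpha tau theta Delta : R) : set R :=
  \bigcup_(g in [set g | Hgrid m k alpha tau theta g /\
                         Rnext m k alpha tau theta tau <= g]) Mset g Delta.

Definition Dens (m k : nat) (alpha tau theta : R) : R :=
  lim ((fun Delta : R =>
          (#|` fset_set (Dunion m k alpha tau theta Delta)|)%:R / Delta)
       @ +oo).

Definition common_multiple (N : seq R) (x : R) : Prop :=
  0 < x /\ forall y, y \in N -> exists z : int, x = z%:~R * y.

(* 1 / LCM(N), with 1/oo = 0 *)
Definition invLCM (N : seq R) : R :=
  if asbool (exists x, common_multiple N x)
  then (inf [set x | common_multiple N x])^-1 else 0.

(* elements of S^{alpha,prim}_{m,k}, indexed by ('I_k * bool):
   (kappa-1, false) |-> m^{(kappa-1)/k},  (kappa-1, true) |-> alpha m^{(kappa-1)/k} *)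
Definition Sprim (m k : nat) (alpha : R) (i : 'I_k * bool) : R :=
  if i.2 then alpha * m%:R `^ ((i.1)%:R / k%:R) else m%:R `^ ((i.1)%:R / k%:R).

(* elements of S^{alpha,sec}_{m,k}:
   (kappa-1, false) |-> m^{(kappa-1)/k},  (kappa-1, true) |-> (1/alpha) m^{kappa/k} *)
Definition Ssec (m k : nat) (alpha : R) (i : 'I_k * bool) : R :=
  if i.2 then alpha^-1 * m%:R `^ ((i.1).+1%:R / k%:R)
  else m%:R `^ ((i.1)%:R / k%:R).

(* inclusion-exclusion sum over nonempty subsets of the (2k distinct) elements *)
Definition SigmaLCM (k : nat) (f : 'I_k * bool -> R) : R :=
  \sum_(N : {set 'I_k * bool} | N != finset.set0)
     (-1) ^+ (#|N|.+1) * invLCM [seq f i | i in N].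

End Defs.

Arguments Sprim {R} m k alpha i.
Arguments Ssec {R} m k alpha i.

(* Write mpow x = m^(x/k) and a = log_{m^(1/k)} alpha, so that 0 < a < 1. In the
   coordinate s = k log_m (t / tau) the grid H^alpha_{m,k,theta} is
   theta + (Z u (a + Z)); hence, with ph = fract (s - theta), the next grid point
   above t is R(t) = t * m^((X - ph)/k), where X = a if ph < a and X = 1 otherwise.
   When theta is uniform on [0, 1] the integrals over theta become integrals of a
   two-piece exponential in ph, computed by splitting [0, 1] at the break points.
   For the density, the grid points above r = R(tau) are exactly the m^q r s, with s
   ranging over S^prim or S^sec according to the coset of the grid containing r; so
   the union of the progressions r s N has asymptotic density SigmaLCM / r by
   inclusion-exclusion, and the same integral computation applies to 1 / R(tau). *)

From HB Require Import structures.
From mathcomp Require Import all_boot all_order all_algebra.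
From mathcomp Require Import finmap.
From mathcomp Require Import all_classical all_reals all_analysis.
From mathcomp Require Import measurable_realfun.
From mathcomp Require Import ring lra zify.
Set Implicit Arguments. Unset Strict Implicit. Unset Printing Implicit Defensive.
Import Order.TTheory GRing.Theory Num.Theory.
Import numFieldNormedType.Exports.
Local Open Scope classical_set_scope.
Local Open Scope ring_scope.

Section ExpIntegrals.
Variable R : realType.
Local Notation mu := (@lebesgue_measure R).

Lemma is_derive_expR_affine (A b K x : R) :
  is_derive x 1 (fun t : R => A * expR (b * (t + K))) (A * (b * expR (b * (x + K)))).
Proof.
have hlin : is_derive x 1 (fun t : R => b * (t + K)) b.
  have := is_deriveZ b (is_deriveD (is_derive_id x (1:R)) (is_derive_cst K x (1:R))).
  by rewrite addr0 /GRing.scale /= mulr1.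
have := is_deriveZ A (is_derive1_comp (is_derive_expR _) hlin).
by move=> h; apply: (is_derive_eq h); rewrite /GRing.scale /= [expR _ * b]mulrC.
Qed.

Lemma continuous_expR_affine (A b K : R) :
  continuous (fun t : R => A * expR (b * (t + K))).
Proof.
move=> x; apply/differentiable_continuous/derivable1_diffP.
by have [] := is_derive_expR_affine A b K x.
Qed.

Lemma integral_expR_affine (f : R -> R) (A b K x y : R) : b != 0 -> x <= y ->
  (forall t, x < t < y -> f t = A * expR (b * (t + K))) ->
  measurable_fun `[x, y] f /\
  (\int[mu]_(t in `[x, y]) (f t)%:E
    = ((A * expR (b * (y + K)) - A * expR (b * (x + K))) / b)%:E)%E.
Proof.
move=> b0; rewrite le_eqVlt => /predU1P[<- _|xy fE].
  rewrite set_itv1 integral_set1 subrr mul0r.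
  by split => //; exact: measurable_fun_set1.
pose g t := A * expR (b * (t + K)).
have mg : measurable_fun `]x, y[ g.
  exact: measurable_funS (continuous_measurable_fun (@continuous_expR_affine A b K)).
have mf : measurable_fun `]x, y[ f.
  by apply: eq_measurable_fun mg => t; rewrite inE /= in_itv /= => /fE.
split; first by apply/measurable_fun_itv_obnd_cbndP/measurable_fun_itv_bndo_bndcP.
rewrite (@integral_itv_bndoo _ x y _ true false); last exact/measurable_EFinP.
transitivity (\int[mu]_(t in `]x, y[) (g t)%:E)%E.
  by apply: eq_integral => t; rewrite inE /= in_itv /= => /fE ->.
rewrite -(@integral_itv_bndoo _ x y _ true false); last exact/measurable_EFinP.
pose F t := (A / b) * expR (b * (t + K)).
rewrite (@continuous_FTC2 _ _ F) //.
- by rewrite -EFinB; congr (_%:E); rewrite /F; field.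
- by apply: continuous_in_subspaceT => z _; exact: continuous_expR_affine.
- split.
  + by move=> z _; have [] := is_derive_expR_affine (A / b) b K z.
  + by apply: cvg_at_right_filter; exact: continuous_expR_affine.
  + by apply: cvg_at_left_filter; exact: continuous_expR_affine.
- move=> z _; rewrite derive1E.
  by have [_ ->] := is_derive_expR_affine (A / b) b K z; rewrite /g; field.
Qed.

Lemma integral_itv_cc_split (f : R -> R) (x y z : R) : x <= y -> y <= z ->
  measurable_fun `[x, y] f -> measurable_fun `[y, z] f ->
  measurable_fun `[x, z] f /\
  (\int[mu]_(t in `[x, z]) (f t)%:E
    = \int[mu]_(t in `[x, y]) (f t)%:E + \int[mu]_(t in `[y, z]) (f t)%:E)%E.
Proof.
move=> xy yz mxy myz.
have xzE : `[x, z]%classic = `[x, y]%classic `|` `]y, z]%classic :> set R.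
  by apply: itv_bndbnd_setU; rewrite bnd_simp.
have myz' : measurable_fun `]y, z] f.
  by apply: measurable_funS myz => //; apply: subset_itvr; rewrite bnd_simp.
have mxz : measurable_fun `[x, z] f by rewrite xzE; exact/measurable_funU.
split => //; rewrite xzE integral_setU //.
- by rewrite integral_itv_obnd_cbnd //; exact/(measurable_EFinP _ f).
- by apply/(measurable_EFinP _ f); rewrite -xzE.
- apply/disj_setPS => t [/=]; rewrite !in_itv /= => /andP[_ ty] /andP[yt _].
  by move: (lt_le_trans yt ty); rewrite ltxx.
Qed.

Lemma integral_expR_three_pieces (f : R -> R) (b x y A1 A2 A3 K1 K2 K3 : R) :
  b != 0 -> 0 <= x -> x <= y -> y <= 1 ->
  (forall t, 0 < t < x -> f t = A1 * expR (b * (t + K1))) ->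
  (forall t, x < t < y -> f t = A2 * expR (b * (t + K2))) ->
  (forall t, y < t < 1 -> f t = A3 * expR (b * (t + K3))) ->
  (\int[mu]_(t in `[0%R, 1%R]) (f t)%:E
    = ((A1 * expR (b * (x + K1)) - A1 * expR (b * (0 + K1))
      + (A2 * expR (b * (y + K2)) - A2 * expR (b * (x + K2)))
      + (A3 * expR (b * (1 + K3)) - A3 * expR (b * (y + K3)))) / b)%:E)%E.
Proof.
move=> b0 x0 xy y1 f1 f2 f3.
have [m1 I1] := integral_expR_affine b0 x0 f1.
have [m2 I2] := integral_expR_affine b0 xy f2.
have [m3 I3] := integral_expR_affine b0 y1 f3.
have [m12 I12] := integral_itv_cc_split x0 xy m1 m2.
have [_ ->] := integral_itv_cc_split (le_trans x0 xy) y1 m12 m3.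
by rewrite I12 I1 I2 I3 -!EFinD !mulrDl.
Qed.

End ExpIntegrals.

Section FractIntegral.
Variable R : realType.
Local Notation mu := (@lebesgue_measure R).

Definition fract (x : R) := x - (Num.floor x)%:~R.

Lemma floorDfract (x : R) : x = (Num.floor x)%:~R + fract x.
Proof. by rewrite /fract addrC subrK. Qed.

Lemma fract_itv (x : R) : 0 <= fract x < 1.
Proof. by have := floor_itv x; rewrite intrD1 /fract => /andP[? ?]; apply/andP; split; lra. Qed.

Lemma fract_sub (s t : R) : 0 <= fract s - t < 1 -> fract (s - t) = fract s - t.
Proof.
rewrite /fract => /andP[h0 h1]; suff -> : Num.floor (s - t) = Num.floor s by rewrite addrAC.
by apply: floor_def; rewrite intrD1; apply/andP; split; lra.
Qed.

Lemma fract_sub_wrap (s t : R) : -1 <= fract s - t < 0 -> fract (s - t) = fract s - t + 1.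
Proof.
rewrite /fract => /andP[h0 h1]; suff -> : Num.floor (s - t) = Num.floor s - 1.
  by rewrite intrB /=; lra.
by apply: floor_def; rewrite subrK intrB /=; apply/andP; split; lra.
Qed.

Definition twopiece_exp (a b A1 A2 p : R) :=
  if p < a then A1 * expR (b * (a - p)) else A2 * expR (b * (1 - p)).

Section Integral.
Variables (a b A1 A2 s : R).
(* As t runs over [0, 1], fract (s - t) decreases from fract s and wraps to 1 at t = fract s;
   the two break points of twopiece_exp split [0, 1] into three exponential pieces. *)
Let f t := twopiece_exp a b A1 A2 (fract (s - t)).
Local Notation s0 := (fract s).

Let integral_fract_ge : 0 < a -> b != 0 -> a <= s0 ->
  (\int[mu]_(t in `[0%R, 1%R]) (f t)%:E
    = ((A1 * (expR (b * a) - 1) + A2 * (expR (b * (1 - a)) - 1)) / b)%:E)%E.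
Proof.
move=> a_gt0 b_neq0 as0; have /andP[s0_ge0 s0_lt1] := fract_itv s.
rewrite (@integral_expR_three_pieces _ f b (s0 - a) s0 A2 A1 A2
  (1 - s0) (a - s0) (- s0)) //.
- have -> : s0 - a + (1 - s0) = 1 - a by ring.
  have -> : s0 + (a - s0) = a by ring.
  have -> : s0 - a + (a - s0) = 0 by ring.
  by rewrite !(addrN, add0r, mulr0, expR0); congr EFin; field.
- by lra.
- by lra.
- by lra.
- move=> t /andP[t0 t1]; rewrite /f fract_sub; last by apply/andP; split; lra.
  by rewrite /twopiece_exp ifF; [congr (_ * expR (_ * _)); lra | apply/negbTE; rewrite -leNgt; lra].
- move=> t /andP[t0 t1]; rewrite /f fract_sub; last by apply/andP; split; lra.
  by rewrite /twopiece_exp ifT; [congr (_ * expR (_ * _)); lra | lra].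
- move=> t /andP[t0 t1]; rewrite /f fract_sub_wrap; last by apply/andP; split; lra.
  by rewrite /twopiece_exp ifF; [congr (_ * expR (_ * _)); lra | apply/negbTE; rewrite -leNgt; lra].
Qed.

Let integral_fract_lt : a < 1 -> b != 0 -> s0 < a ->
  (\int[mu]_(t in `[0%R, 1%R]) (f t)%:E
    = ((A1 * (expR (b * a) - 1) + A2 * (expR (b * (1 - a)) - 1)) / b)%:E)%E.
Proof.
move=> a_lt1 b_neq0 s0a; have /andP[s0_ge0 s0_lt1] := fract_itv s.
rewrite (@integral_expR_three_pieces _ f b s0 (s0 + 1 - a) A1 A2 A1
  (a - s0) (- s0) (a - s0 - 1)) //.
- have -> : s0 + (a - s0) = a by ring.
  have -> : s0 + 1 - a - s0 = 1 - a by ring.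
  have -> : 1 + (a - s0 - 1) = a - s0 by ring.
  have -> : s0 + 1 - a + (a - s0 - 1) = 0 by ring.
  by rewrite !(addrN, add0r, mulr0, expR0); congr EFin; field.
- by lra.
- by lra.
- move=> t /andP[t0 t1]; rewrite /f fract_sub; last by apply/andP; split; lra.
  by rewrite /twopiece_exp ifT; [congr (_ * expR (_ * _)); lra | lra].
- move=> t /andP[t0 t1]; rewrite /f fract_sub_wrap; last by apply/andP; split; lra.
  by rewrite /twopiece_exp ifF; [congr (_ * expR (_ * _)); lra | apply/negbTE; rewrite -leNgt; lra].
- move=> t /andP[t0 t1]; rewrite /f fract_sub_wrap; last by apply/andP; split; lra.
  by rewrite /twopiece_exp ifT; [congr (_ * expR (_ * _)); lra | lra].
Qed.

Lemma integral_twopiece_exp_fract : 0 < a < 1 -> b != 0 ->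
  (\int[mu]_(t in `[0%R, 1%R]) (twopiece_exp a b A1 A2 (fract (s - t)))%:E
    = ((A1 * (expR (b * a) - 1) + A2 * (expR (b * (1 - a)) - 1)) / b)%:E)%E.
Proof.
move=> /andP[a_gt0 a_lt1] b_neq0.
by have [/(integral_fract_ge a_gt0 b_neq0)|/(integral_fract_lt a_lt1 b_neq0)] := leP a (fract s).
Qed.

End Integral.
End FractIntegral.

Lemma ltr_intD1 (R : numDomainType) (n p : int) :
  (n%:~R < p%:~R :> R) = (n%:~R + 1 <= p%:~R :> R).
Proof. by rewrite -intrD1 ler_int ltr_int lezD1. Qed.

Lemma inf_eq_min (R : realType) (S : set R) (x : R) :
  S x -> (forall y, S y -> x <= y) -> inf S = x.
Proof.
move=> Sx lb; apply/le_anti/andP; split.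
  by apply: (ge_inf (_ : has_lbound S)) => //; exists x.
by apply: lb_le_inf => //; exists x.
Qed.

Lemma cvg_pinfty_dist_le_div (R : realType) (f : R -> R) (l C : R) : 0 <= C ->
  (forall D, 0 < D -> `|f D - l| <= C / D) -> f @ +oo --> l.
Proof.
move=> C0 hb; apply/cvgrPdist_lt => e e0.
exists ((C + 1) / e); split; first by rewrite num_real.
move=> D hD; have D0 : 0 < D by apply: lt_trans hD; rewrite divr_gt0 // ltr_wpDl.
rewrite distrC; apply: le_lt_trans (hb _ D0) _.
rewrite ltr_pdivrMr //; move: hD; rewrite ltr_pdivrMr // => hD.
by rewrite mulrC; apply: lt_trans hD; lra.
Qed.

Section LCM.
Variable R : realType.
Implicit Types (N : seq R) (x L r : R).

Lemma exists_lcm N y0 : y0 \in N -> 0 < y0 -> (exists x, common_multiple N x) ->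
  exists2 L, 0 < L &
    forall x, common_multiple N x <-> exists2 n : nat, (0 < n)%N & x = n%:R * L.
Proof.
move=> y0N y0_gt0 [x0 [x0_gt0 hx0]].
pose P n := `[< common_multiple N (n.+1%:R * y0) >].
have exP : exists n, P n.
  have [z0 x0E] := hx0 _ y0N.
  have z0_gt0 : (0 < z0)%R by rewrite -(ltr0z R) -(pmulr_lgt0 _ y0_gt0) -x0E.
  exists `|z0|.-1; apply/asboolP; rewrite prednK; last by lia.
  by rewrite -[_%:R]/((Posz `|z0|)%:~R) gez0_abs ?ltW // -x0E.
have [n0 /asboolP[L0_gt0 hL0] minn0] := ex_minnP exP.
exists (n0.+1%:R * y0) => // x; split; last first.
  move=> [n n_gt0 ->]; split; first by rewrite mulr_gt0 // ltr0n.
  by move=> y /hL0[z ->]; exists (n%:Z * z); rewrite intrM mulrA.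
move=> [x_gt0 hx]; have [z xE] := hx _ y0N.
have z_gt0 : (0 < z)%R by rewrite -(ltr0z R) -(pmulr_lgt0 _ y0_gt0) -xE.
pose q := (`|z| %/ n0.+1)%N; pose r := (`|z| %% n0.+1)%N.
have {}xE : x = (q * n0.+1)%:R * y0 + r%:R * y0.
  rewrite -mulrDl -natrD -divn_eq xE.
  by rewrite -[_%:R]/((Posz `|z|)%:~R) gez0_abs // ltW.
(* the remainder r y0 is again a common multiple, contradicting minimality *)
have r0 : r = 0%N.
  apply/eqP; rewrite -leqn0 leqNgt; apply/negP => r_gt0.
  have : P r.-1.
    apply/asboolP; rewrite prednK //; split; first by rewrite mulr_gt0 // ltr0n.
    move=> y yN; have [zx hzx] := hx _ yN; have [zl hzl] := hL0 _ yN.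
    exists (zx - q%:Z * zl); rewrite intrB intrM mulrBl -mulrA -hzl -hzx.
    by rewrite xE natrM -[q%:~R]/(q%:R); ring.
  move/minn0; have : (r < n0.+1)%N by rewrite ltn_mod.
  by lia.
exists q; last by rewrite xE r0 mul0r addr0 natrM mulrA.
rewrite lt0n; apply: contraTneq x_gt0 => q0.
by rewrite xE q0 r0 !mul0r addr0 ltxx.
Qed.

Lemma invLCME N L : 0 < L ->
  (forall x, common_multiple N x <-> exists2 n : nat, (0 < n)%N & x = n%:R * L) ->
  invLCM N = L^-1.
Proof.
move=> L_gt0 hL; have LN : common_multiple N L by apply/hL; exists 1%N; rewrite ?mul1r.
rewrite /invLCM asboolT; last by exists L.
congr (_^-1); apply: inf_eq_min => // y /hL[n n_gt0 ->].
by rewrite ler_pMl // ler1n.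
Qed.

Lemma invLCM_none N : ~ (exists x, common_multiple N x) -> invLCM N = 0.
Proof. by move=> h; rewrite /invLCM asboolF. Qed.

Lemma common_multipleZ N r x : 0 < r ->
  common_multiple (map ( *%R r) N) x <-> common_multiple N (x / r).
Proof.
move=> r_gt0; have r_neq0 := lt0r_neq0 r_gt0; split.
- move=> [x_gt0 hx]; split; first by rewrite divr_gt0.
  move=> y yN; have [z ->] := hx (r * y) (map_f _ yN).
  by exists z; field.
- move=> [xr_gt0 hx]; split; first by rewrite -(divfK r_neq0 x) mulr_gt0.
  move=> _ /mapP[y yN ->]; have [z hz] := hx y yN.
  by exists z; rewrite mulrCA -hz mulrC divfK.
Qed.

Lemma invLCMZ N r y0 : 0 < r -> y0 \in N -> 0 < y0 ->
  invLCM (map ( *%R r) N) = r^-1 * invLCM N.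
Proof.
move=> r_gt0 y0N y0_gt0; have r_neq0 := lt0r_neq0 r_gt0.
have [hN|hN] := pselect (exists x, common_multiple N x); last first.
  rewrite !invLCM_none ?mulr0 // => -[x /(common_multipleZ _ _ r_gt0) hx].
  by apply: hN; exists (x / r).
have [L L_gt0 hL] := exists_lcm y0N y0_gt0 hN.
rewrite (invLCME L_gt0 hL) (@invLCME _ (r * L)) ?invfM ?mulr_gt0 // => x.
rewrite common_multipleZ // hL; split => -[n n_gt0 hn]; exists n => //.
  by rewrite -(divfK r_neq0 x) hn; ring.
by rewrite hn; field.
Qed.

End LCM.

Section MultiplesDensity.
Variables (R : realType) (I : finType) (g : I -> R).
Hypothesis g_gt0 : forall i, 0 < g i.

Lemma Mset_natM (M : nat) (h D : R) : (0 < M)%N -> 0 < h ->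
  Mset (M%:R * h) D `<=` Mset h D.
Proof.
move=> M_gt0 h_gt0 x [n [-> hn]]; exists (n * M)%N; split; first by rewrite natrM mulrA.
rewrite natrM -ler_pdivlMr ?ltr0n //; apply: le_trans hn _.
by rewrite invfM mulrA mulrAC.
Qed.

Definition rcard (S : set R) : R := (#|` fset_set S|)%:R.
Definition multiples_union (D : R) := [set x | exists i, Mset (g i) D x].
Definition multiples_inter (J : {set I}) (D : R) :=
  [set x | forall i, i \in J -> Mset (g i) D x].

Lemma Mset_finite (h D : R) : 0 < h -> finite_set (Mset h D).
Proof.
move=> h_gt0.
apply: (@sub_finite_set _ _ ((fun n : nat => n%:R * h) @` `I_(Num.truncn (D / h)).+1)).
  move=> x [n [-> hn]]; exists n => //=.
  by rewrite ltnS truncn_ge_nat // (le_trans _ hn).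
exact/finite_image/finite_II.
Qed.

Lemma multiples_union_finite D : finite_set (multiples_union D).
Proof.
have -> : multiples_union D = \bigcup_(i in [set: I]) Mset (g i) D.
  by apply/seteqP; split => x [i]; [exists i | move=> _; exists i].
by apply: bigcup_finite => [|i _]; [exact: finite_finset | exact: Mset_finite].
Qed.

Lemma rcard_sum (S U : set R) : finite_set U -> S `<=` U ->
  rcard S = \sum_(x <- fset_set U) (x \in S)%:R.
Proof.
move=> fU SU; have fS := sub_finite_set SU fU.
rewrite /rcard card_fset_sum1 natr_sum.
transitivity (\sum_(x <- fset_set U | x \in S) (1 : R)); last first.
  by rewrite big_mkcond; apply: eq_bigr => x _; case: (x \in S).
rewrite -[in RHS]big_filter; apply: perm_big; apply: uniq_perm.
- exact: fset_uniq.
- exact/filter_uniq/fset_uniq.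
move=> x; rewrite mem_filter !in_fset_set //; apply/idP/andP => [xS|[] //].
by split => //; rewrite !inE /= in xS *; exact: SU.
Qed.

Lemma prod_indic_Mset (J : {set I}) D x :
  \prod_(i in J) ((x \in Mset (g i) D)%:R : R) = (x \in multiples_inter J D)%:R.
Proof.
have [[i0 [i0J ni0]]|h] := pselect (exists i, i \in J /\ ~ Mset (g i) D x).
  rewrite (bigD1 i0) //= memNset // mul0r memNset // => hx.
  by apply: ni0; apply: hx.
rewrite mem_set => [|i iJ]; last by apply: contrapT => hn; apply: h; exists i.
rewrite big1 // => i iJ; rewrite mem_set //.
by apply: contrapT => hn; apply: h; exists i.
Qed.

(* expand 0 = prod_i (1 - [x in M_i]) over the subsets of I *)
Lemma inclusion_exclusion_indic D x : multiples_union D x ->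
  1 = \sum_(J : {set I} | J != finset.set0)
        (-1) ^+ #|J|.+1 * ((x \in multiples_inter J D)%:R : R).
Proof.
move=> [i0 hi0].
have : \prod_i (- ((x \in Mset (g i) D)%:R : R) + 1) = 0.
  by rewrite (bigD1 i0) //= mem_set // addNr mul0r.
rewrite bigA_distr.
under eq_bigr => J _ do rewrite -big_mkcond /= prodrN prod_indic_Mset.
rewrite (bigD1 finset.set0) //= cards0 expr0 mul1r mem_set => [|i]; last by rewrite finset.in_set0.
move=> /eqP; rewrite addr_eq0 => /eqP h.
rewrite -[LHS]/(true%:R : R) h -sumrN; apply: eq_bigr => J _.
by rewrite exprS mulN1r mulNr.
Qed.

Lemma rcard_multiples_union D : rcard (multiples_union D) =
  \sum_(J : {set I} | J != finset.set0) (-1) ^+ #|J|.+1 * rcard (multiples_inter J D).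
Proof.
have fU := multiples_union_finite D.
rewrite (rcard_sum fU) //.
transitivity (\sum_(x <- fset_set (multiples_union D))
    \sum_(J : {set I} | J != finset.set0)
      (-1) ^+ #|J|.+1 * ((x \in multiples_inter J D)%:R : R)).
  rewrite big_seq [RHS]big_seq; apply: eq_bigr => x.
  by rewrite in_fset_set // inE => hx; rewrite mem_set //; exact: inclusion_exclusion_indic.
rewrite exchange_big; apply: eq_bigr => J /set0Pn[i iJ].
by rewrite -mulr_sumr (rcard_sum fU) // => x hx; exists i; exact: hx.
Qed.

Lemma multiples_interP (J : {set I}) D i0 x : i0 \in J -> 0 <= D ->
  multiples_inter J D x <->
  x = 0 \/ (common_multiple [seq g i | i in J] x /\ x <= D).
Proof.
move=> i0J D_ge0; split.
- move=> h; have [n [xn hn]] := h i0 i0J.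
  have [n0|n_gt0] := posnP n; [left; by rewrite xn n0 mul0r | right].
  split; last by rewrite xn -ler_pdivlMr.
  split; first by rewrite xn mulr_gt0 // ltr0n.
  move=> y /fintype.imageP[i iJ ->]; have [n' [xn' _]] := h i iJ.
  by exists n'; rewrite xn'.
- case=> [-> | [[x_gt0 hx] xD]] i iJ.
    by exists 0%N; rewrite mul0r; split => //; rewrite divr_ge0 // ltW.
  have [z xE] := hx _ (fintype.image_f g iJ).
  have z_gt0 : (0 < z)%R by rewrite -(ltr0z R) -(pmulr_lgt0 _ (g_gt0 i)) -xE.
  have zE : (`|z|%N%:R : R) = z%:~R by rewrite -[_%:R]/((Posz `|z|)%:~R) gez0_abs // ltW.
  exists `|z|%N; rewrite zE -xE; split => //.
  by rewrite ler_pdivlMr // -xE.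
Qed.

Lemma rcard_multiples_inter_none (J : {set I}) D i0 : i0 \in J -> 0 <= D ->
  ~ (exists x, common_multiple [seq g i | i in J] x) ->
  rcard (multiples_inter J D) = 1.
Proof.
move=> i0J D_ge0 hn; suff -> : multiples_inter J D = [set 0].
  by rewrite /rcard fset_set1 cardfs1.
apply/seteqP; split => x.
  by move/(multiples_interP x i0J D_ge0) => [//|[hx _]]; case: hn; exists x.
by move=> /= ->; apply/(multiples_interP 0 i0J D_ge0); left.
Qed.

Lemma rcard_multiples_inter_lcm (J : {set I}) D i0 L : i0 \in J -> 0 <= D -> 0 < L ->
  (forall x, common_multiple [seq g i | i in J] x <->
     exists2 n : nat, (0 < n)%N & x = n%:R * L) ->
  rcard (multiples_inter J D) = (Num.truncn (D / L)).+1%:R.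
Proof.
move=> i0J D_ge0 L_gt0 hL; set K := Num.truncn (D / L).
have DL_ge0 : 0 <= D / L by rewrite divr_ge0 // ltW.
suff -> : multiples_inter J D = [set` [fset (val i)%:R * L | i in 'I_K.+1]%fset].
  rewrite /rcard set_fsetK card_imfset ?size_enum_ord //.
  move=> i j /= /(mulIf (lt0r_neq0 L_gt0)) /eqP; rewrite eqr_nat => /eqP.
  exact: val_inj.
apply/seteqP; split => x.
  move/(multiples_interP x i0J D_ge0) => [->|[/hL[n n_gt0 ->] hD]] /=.
    by apply/imfsetP; exists ord0 => //=; rewrite mul0r.
  have nK : (n < K.+1)%N by rewrite ltnS /K truncn_ge_nat // ler_pdivlMr.
  by apply/imfsetP; exists (Ordinal nK).
move=> /= /imfsetP[i _ ->]; apply/(multiples_interP _ i0J D_ge0).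
have [i_eq0|i_gt0] := posnP i; [left; by rewrite i_eq0 mul0r | right].
split; first by apply/hL; exists i.
by rewrite -ler_pdivlMr //; have := ltn_ord i; rewrite ltnS /K -truncn_ge_nat.
Qed.

Lemma rcard_multiples_inter_approx (J : {set I}) D : J != finset.set0 -> 0 < D ->
  `|rcard (multiples_inter J D) / D - invLCM [seq g i | i in J]| <= D^-1.
Proof.
case/set0Pn => i0 i0J D_gt0; have y0N := fintype.image_f g i0J.
have [hN|hN] := pselect (exists x, common_multiple [seq g i | i in J] x); last first.
  rewrite (rcard_multiples_inter_none i0J (ltW D_gt0) hN) invLCM_none //.
  by rewrite subr0 mul1r ger0_norm // invr_ge0 ltW.
have [L L_gt0 hL] := exists_lcm y0N (g_gt0 i0) hN.
rewrite (invLCME L_gt0 hL) (rcard_multiples_inter_lcm i0J (ltW D_gt0) L_gt0 hL).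
have /andP[] := truncn_itv (divr_ge0 (ltW D_gt0) (ltW L_gt0)).
set K := Num.truncn (D / L); rewrite -natr1 => h1 h2.
have -> : L^-1 = (D / L) / D by field; rewrite !lt0r_neq0.
rewrite -mulrBl ger0_norm; last by rewrite mulr_ge0 ?invr_ge0 ?(ltW D_gt0) //; lra.
by rewrite -[X in _ <= X]mul1r ler_pM2r ?invr_gt0 //; lra.
Qed.

Lemma density_multiples_union :
  (fun D => rcard (multiples_union D) / D) @ +oo -->
  \sum_(J : {set I} | J != finset.set0) (-1) ^+ #|J|.+1 * invLCM [seq g i | i in J].
Proof.
apply: (@cvg_pinfty_dist_le_div _ _ _ (\sum_(J : {set I} | J != finset.set0) (1 : R))).
  exact: sumr_ge0.
move=> D D_gt0; rewrite rcard_multiples_union mulr_suml -sumrB mulr_suml.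
apply: le_trans (ler_norm_sum _ _ _) _; apply: ler_sum => J J0.
rewrite -mulrA -mulrBr normrM normrX normrN1 expr1n !mul1r.
exact: rcard_multiples_inter_approx.
Qed.

End MultiplesDensity.

Section Grid.
Variables (R : realType) (m k : nat) (alpha tau : R).
Hypotheses (m_ge2 : (2 <= m)%N) (k_ge1 : (1 <= k)%N) (alpha_gt1 : 1 < alpha)
  (alpha_lt : alpha < m%:R `^ (k%:R^-1)) (tau_gt0 : 0 < tau).
Local Notation mu := (@lebesgue_measure R).

Let c : R := ln m%:R / k%:R.
Let mpow (x : R) := expR (c * x).
Let a := ln alpha / c.

Let m_gt1 : 1 < (m%:R : R). Proof. by rewrite ltr1n. Qed.
Let m_gt0 : 0 < (m%:R : R). Proof. exact: lt_trans ltr01 m_gt1. Qed.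
Let k_gt0 : 0 < (k%:R : R). Proof. by rewrite ltr0n. Qed.
Let c_gt0 : 0 < c. Proof. by rewrite divr_gt0 ?ln_gt0. Qed.
Let alpha_gt0 : 0 < alpha. Proof. exact: lt_trans ltr01 alpha_gt1. Qed.

Let mpow_gt0 x : 0 < mpow x. Proof. exact: expR_gt0. Qed.
Let mpowD x y : mpow (x + y) = mpow x * mpow y. Proof. by rewrite /mpow mulrDr expRD. Qed.

Let powR_mpow y : m%:R `^ (y / k%:R) = mpow y.
Proof.
by rewrite /powR gt_eqF //; congr expR; rewrite /c; ring.
Qed.

Let mpow1 : m%:R `^ (k%:R^-1) = mpow 1. Proof. by rewrite -powR_mpow div1r. Qed.

Let alpha_mpow : alpha = mpow a.
Proof. by rewrite /mpow /a mulrC divfK ?lnK ?posrE // lt0r_neq0. Qed.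

Let a_gt0 : 0 < a. Proof. by rewrite divr_gt0 ?ln_gt0. Qed.
Let a_lt1 : a < 1.
Proof. by move: alpha_lt; rewrite mpow1 alpha_mpow /mpow ltr_expR ltr_pM2l. Qed.

Let ltr_tau_mpow x y : (tau * mpow x < tau * mpow y) = (x < y).
Proof. by rewrite ltr_pM2l // ltr_expR ltr_pM2l. Qed.
Let ler_tau_mpow x y : (tau * mpow x <= tau * mpow y) = (x <= y).
Proof. by rewrite ler_pM2l // ler_expR ler_pM2l. Qed.

Let mpow_natMk (q : nat) : mpow (q%:R * k%:R) = (m ^ q)%:R.
Proof.
rewrite /mpow natrX -(lnK (_ : (m%:R : R) \in Num.pos)) ?posrE //.
by rewrite -expRM_natl; congr expR; rewrite /c mulrCA divfK ?lt0r_neq0 // mulrC.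
Qed.

Let mpow_int (d : int) : (0 <= d)%R ->
  exists (q : nat) (j : 'I_k), mpow d%:~R = (m ^ q)%:R * mpow j%:R.
Proof.
move=> d_ge0; exists (`|d| %/ k)%N, (Ordinal (ltn_pmod `|d| k_ge1)) => /=.
rewrite -mpow_natMk -mpowD; congr mpow.
by rewrite -[d%:~R]/(d%:~R) -{1}(gez0_abs d_ge0) -[_%:~R]/(_%:R) {1}(divn_eq `|d| k) natrD natrM.
Qed.

Let lattice (x0 delta : R) : set R := [set g | exists p : int,
  g = tau * mpow (x0 + p%:~R) \/ g = tau * mpow (x0 + delta + p%:~R)].

Let HgridE theta : Hgrid m k alpha tau theta = lattice theta a.
Proof.
apply/seteqP; split => g [p hp]; exists p; move: hp;
  rewrite !powR_mpow !mpowD -alpha_mpow => -[->|->]; [left|right|left|right]; ring.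
Qed.

Let latticeZ x0 delta (n : int) : lattice (x0 + n%:~R) delta = lattice x0 delta.
Proof.
apply/seteqP; split => g [p hp].
  by exists (n + p); rewrite intrD; case: hp => ->; [left|right]; congr (_ * mpow _); ring.
exists (p - n); rewrite intrB; case: hp => ->; [left|right]; congr (_ * mpow _); ring.
Qed.

Let lattice_swap x0 delta : lattice (x0 + delta) (1 - delta) = lattice x0 delta.
Proof.
apply/seteqP; split => g [p [->|->]].
- by exists p; right.
- by exists (p + 1); left; rewrite intrD1; congr (_ * mpow _); ring.
- by exists (p - 1); right; rewrite intrB; congr (_ * mpow _); ring.
- by exists p; left.
Qed.

Definition grid_coord (t : R) := ln (t / tau) / c.

Let tau_mpow_grid_coord t : 0 < t -> tau * mpow (grid_coord t) = t.
Proof.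
move=> t_gt0; rewrite /mpow /grid_coord [c * _]mulrC divfK ?lt0r_neq0 //.
by rewrite lnK ?posrE ?divr_gt0 // mulrC divfK // lt0r_neq0.
Qed.

Definition next_offset (p : R) := if p < a then a else 1.

Lemma RnextE theta t : 0 < t ->
  let s := grid_coord t - theta in
  Rnext m k alpha tau theta t
    = tau * mpow (theta + (Num.floor s)%:~R + next_offset (fract s)).
Proof.
move=> t_gt0 s; set n := Num.floor s; set ph := fract s.
have sE : grid_coord t = theta + n%:~R + ph by have := floorDfract s; rewrite -/n -/ph /s; lra.
have /andP[ph_ge0 ph_lt1] := fract_itv s; rewrite -/ph in ph_ge0 ph_lt1.
have a0 := a_gt0; have a1 := a_lt1.
rewrite /Rnext HgridE; apply: inf_eq_min.
- split; last first.
    rewrite -[X in X < _](tau_mpow_grid_coord t_gt0) sE ltr_tau_mpow /next_offset.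
    by case: ifP; lra.
  rewrite /next_offset; case: ifP => _; first by exists n; right; congr (_ * mpow _); ring.
  by exists (n + 1); left; rewrite intrD1 addrA.
- move=> y [[p [->|->]]]; rewrite -(tau_mpow_grid_coord t_gt0) sE ltr_tau_mpow ler_tau_mpow => ylt.
  + have : n%:~R + 1 <= (p%:~R : R) by rewrite -ltr_intD1; lra.
    by rewrite /next_offset; case: ifP; lra.
  + rewrite /next_offset; case: ifP => ph_a.
      have : (n - 1)%:~R + 1 <= (p%:~R : R) by rewrite -ltr_intD1 intrB; lra.
      by rewrite intrB; lra.
    have : n%:~R + 1 <= (p%:~R : R).
      by rewrite -ltr_intD1; move: ph_a => /negbT; rewrite -leNgt; lra.
    by lra.
Qed.

Let Rnext_fract theta t : 0 < t ->
  let ph := fract (grid_coord t - theta) in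
  Rnext m k alpha tau theta t = t * mpow (next_offset ph - ph).
Proof.
move=> t_gt0 ph; rewrite RnextE // -[in RHS](tau_mpow_grid_coord t_gt0) -mulrA -mpowD.
by congr (_ * mpow _); have := floorDfract (grid_coord t - theta); rewrite -/ph; lra.
Qed.

Let k_div_ln_m : k%:R / ln m%:R = c^-1. Proof. by rewrite invf_div. Qed.
Let expR_a : expR (c * a) = alpha. Proof. by rewrite alpha_mpow. Qed.
Let expR_1a : expR (c * (1 - a)) = m%:R `^ (k%:R^-1) / alpha.
Proof. by rewrite mpow1 alpha_mpow /mpow -expRB mulrBr mulr1. Qed.

Lemma expect_Rnext t : 0 < t ->
  (\int[mu]_(theta in `[0%R, 1%R]) (Rnext m k alpha tau theta t)%:E)%E
  = ((k%:R / ln m%:R) * (alpha + m%:R `^ (k%:R^-1) / alpha - 2) * t)%:E.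
Proof.
move=> t_gt0; transitivity (\int[mu]_(theta in `[0%R, 1%R])
    (twopiece_exp a c t t (fract (grid_coord t - theta)))%:E)%E.
  by apply: eq_integral => theta _; rewrite Rnext_fract // /twopiece_exp /next_offset; case: ifP.
rewrite integral_twopiece_exp_fract ?a_gt0 ?a_lt1 ?lt0r_neq0 //.
by rewrite expR_a expR_1a k_div_ln_m; congr EFin; field; rewrite !lt0r_neq0.
Qed.

Let expR_Na : expR (- c * a) = alpha^-1. Proof. by rewrite mulNr expRN expR_a. Qed.
Let expR_N1a : expR (- c * (1 - a)) = alpha / m%:R `^ (k%:R^-1).
Proof. by rewrite mulNr expRN expR_1a invf_div. Qed.

Let Rnext_inv_fract theta t : 0 < t ->
  (Rnext m k alpha tau theta t)^-1
  = twopiece_exp a (- c) t^-1 t^-1 (fract (grid_coord t - theta)).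
Proof.
move=> t_gt0; rewrite Rnext_fract // invfM /mpow -expRN /twopiece_exp /next_offset.
by case: ifP; rewrite mulNr.
Qed.

Lemma expect_Rnext_inv t : 0 < t ->
  (\int[mu]_(theta in `[0%R, 1%R]) ((Rnext m k alpha tau theta t)^-1)%:E)%E
  = ((k%:R / ln m%:R) * (2 - alpha^-1 - alpha / m%:R `^ (k%:R^-1)) / t)%:E.
Proof.
move=> t_gt0; under eq_integral => theta _ do rewrite Rnext_inv_fract //.
rewrite integral_twopiece_exp_fract ?a_gt0 ?a_lt1 ?oppr_eq0 ?lt0r_neq0 //.
rewrite expR_Na expR_N1a k_div_ln_m; congr EFin; field.
by rewrite !lt0r_neq0 // mpow1.
Qed.

Let Sdelta (delta : R) (i : 'I_k * bool) : R :=
  if i.2 then mpow (i.1%:R + delta) else mpow i.1%:R.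

Let Sprim_mpow : Sprim m k alpha = Sdelta a.
Proof.
apply/funext => -[j [|]]; rewrite /Sprim /Sdelta /= powR_mpow //.
by rewrite mpowD -alpha_mpow mulrC.
Qed.

Let Ssec_mpow : Ssec m k alpha = Sdelta (1 - a).
Proof.
apply/funext => -[j [|]]; rewrite /Ssec /Sdelta /= !powR_mpow //.
by rewrite alpha_mpow /mpow -expRN -expRD -natr1; congr expR; ring.
Qed.

Let lattice_Sdelta x0 delta i : 0 <= delta ->
  lattice x0 delta (tau * mpow x0 * Sdelta delta i) /\
  tau * mpow x0 <= tau * mpow x0 * Sdelta delta i.
Proof.
case: i => j [|] delta_ge0; rewrite /Sdelta /= -mulrA -mpowD ler_tau_mpow.
  by split; [exists j; right; rewrite addrA addrAC | rewrite lerDl addr_ge0].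
by split; [exists j; left | rewrite lerDl].
Qed.

Let lattice_above_Sdelta x0 delta g : 0 <= delta < 1 ->
  lattice x0 delta g -> tau * mpow x0 <= g ->
  exists (q : nat) i, g = (m ^ q)%:R * (tau * mpow x0 * Sdelta delta i).
Proof.
move=> /andP[delta_ge0 delta_lt1] [p [->|->]]; rewrite ler_tau_mpow => le_x0.
  have [|q [j pE]] := @mpow_int p; first by rewrite -(ler0z R); lra.
  by exists q, (j, false); rewrite /Sdelta /= mpowD pE; ring.
have [|q [j pE]] := @mpow_int p.
  by rewrite -ltzD1 -(ltr0z R) intrD1; lra.
by exists q, (j, true); rewrite /Sdelta /= -addrA [delta + _]addrC !mpowD pE; ring.
Qed.

Let next_delta theta := if fract (grid_coord tau - theta) < a then 1 - a else a.

Let Rnext_tau_lattice theta : exists x0,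
  Rnext m k alpha tau theta tau = tau * mpow x0 /\
  Hgrid m k alpha tau theta = lattice x0 (next_delta theta).
Proof.
rewrite RnextE // HgridE /next_delta /next_offset.
set n := Num.floor _; case: ifP => _; eexists; (split; first by []).
  by rewrite lattice_swap latticeZ.
by rewrite -addrA -intrD1 latticeZ.
Qed.

Let Sdelta_gt0 delta i : 0 < Sdelta delta i.
Proof. by rewrite /Sdelta; case: ifP. Qed.

Let Rnext_gt0 theta t : 0 < t -> 0 < Rnext m k alpha tau theta t.
Proof. by move=> t_gt0; rewrite RnextE // mulr_gt0. Qed.

Let DunionE theta D : Dunion m k alpha tau theta D =
  multiples_union (fun i => Rnext m k alpha tau theta tau * Sdelta (next_delta theta) i) D.
Proof.
have [x0 [Rnext_x0 gridE]] := Rnext_tau_lattice theta; rewrite Rnext_x0.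
have delta_itv : 0 <= next_delta theta < 1.
  by have a0 := a_gt0; have a1 := a_lt1; rewrite /next_delta; case: ifP; lra.
apply/seteqP; split => x.
  move=> [g [lat_g le_g] hx]; rewrite gridE in lat_g; rewrite Rnext_x0 in le_g.
  have [q [i gE]] := lattice_above_Sdelta delta_itv lat_g le_g; rewrite gE in hx.
  exists i; apply: Mset_natM hx; first by rewrite expn_gt0 (leq_trans _ m_ge2).
  by rewrite !mulr_gt0.
move=> [i hx]; have /andP[delta_ge0 _] := delta_itv.
have [lat le_x0] := lattice_Sdelta x0 i delta_ge0.
by exists (tau * mpow x0 * Sdelta (next_delta theta) i) => //; rewrite /= gridE Rnext_x0.
Qed.

Let DensE theta : Dens m k alpha tau theta =
  (Rnext m k alpha tau theta tau)^-1 * SigmaLCM (Sdelta (next_delta theta)).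
Proof.
set r := Rnext _ _ _ _ _ _; set S := Sdelta _; have r_gt0 : 0 < r := Rnext_gt0 theta tau_gt0.
have rS_gt0 i : 0 < r * S i by rewrite mulr_gt0 ?Sdelta_gt0.
rewrite /Dens (_ : (fun Delta => _) = fun D => rcard (multiples_union (fun i => r * S i) D) / D);
  last by apply/funext => D; rewrite DunionE.
rewrite (cvg_lim (@Rhausdorff R) (density_multiples_union rS_gt0)) /SigmaLCM mulr_sumr.
apply: eq_bigr => J /set0Pn[i0 i0J]; rewrite mulrCA; congr (_ * _).
have -> : [seq r * S i | i in J] = map ( *%R r) [seq S i | i in J] by rewrite -map_comp.
exact: invLCMZ r_gt0 (fintype.image_f S i0J) (Sdelta_gt0 _ _).
Qed.

Lemma expect_Dens :
  (\int[mu]_(theta in `[0%R, 1%R]) (Dens m k alpha tau theta)%:E)%E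
  = ((k%:R / ln m%:R) *
       ((1 - alpha / m%:R `^ (k%:R^-1)) * SigmaLCM (Sprim m k alpha)
        + (1 - alpha^-1) * SigmaLCM (Ssec m k alpha)) / tau)%:E.
Proof.
transitivity (\int[mu]_(theta in `[0%R, 1%R])
   (twopiece_exp a (- c) (SigmaLCM (Ssec m k alpha) / tau) (SigmaLCM (Sprim m k alpha) / tau)
      (fract (grid_coord tau - theta)))%:E)%E.
  apply: eq_integral => theta _; rewrite DensE Rnext_inv_fract // Ssec_mpow Sprim_mpow.
  by rewrite /next_delta /twopiece_exp; case: ifP => _; congr EFin; ring.
rewrite integral_twopiece_exp_fract ?a_gt0 ?a_lt1 ?oppr_eq0 ?lt0r_neq0 //.
rewrite expR_Na expR_N1a k_div_ln_m; congr EFin; field.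
by rewrite !lt0r_neq0 // mpow1.
Qed.

End Grid.

Theorem claim4p1 (R : realType) (m k : nat) (alpha tau : R) :
  (2 <= m)%N -> (1 <= k)%N ->
  1 < alpha -> alpha < m%:R `^ (k%:R^-1) -> 0 < tau ->
  (forall t : R, 0 < t ->
     (\int[@lebesgue_measure R]_(theta in `[0%R, 1%R]%classic)
        (Rnext m k alpha tau theta t)%:E)%E
     = ((k%:R / ln m%:R) * (alpha + m%:R `^ (k%:R^-1) / alpha - 2) * t)%:E)
  /\
  (forall t : R, 0 < t ->
     (\int[@lebesgue_measure R]_(theta in `[0%R, 1%R]%classic)
        ((Rnext m k alpha tau theta t)^-1)%:E)%E
     = ((k%:R / ln m%:R) * (2 - alpha^-1 - alpha / m%:R `^ (k%:R^-1)) / t)%:E)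
  /\
  (\int[@lebesgue_measure R]_(theta in `[0%R, 1%R]%classic)
      (Dens m k alpha tau theta)%:E)%E
  = ((k%:R / ln m%:R) *
       ((1 - alpha / m%:R `^ (k%:R^-1)) * SigmaLCM (Sprim m k alpha)
        + (1 - alpha^-1) * SigmaLCM (Ssec m k alpha)) / tau)%:E.
Proof.
move=> m_ge2 k_ge1 alpha_gt1 alpha_lt tau_gt0; split; [|split].
- exact: expect_Rnext.
- exact: expect_Rnext_inv.
- exact: expect_Dens.
Qed.
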